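(* Let $q\in\mathbb{C}^\times$ be not a root of unity, $n\ge2$, $\mathbf{Q}=(Q_1,\dots,Q_{n-1})\in\mathbb{C}^{n-1}$. Every one-dimensional $U_q(\mathfrak{sl}_n^{\langle\mathbf{Q}\rangle}[x])$-module is isomorphic to $\mathcal{D}^{\langle\mathbf{Q}\rangle}_{\boldsymbol\beta}$ for some $\boldsymbol\beta\in\mathbb{B}^{\langle\mathbf{Q}\rangle}$.
   Context: Let $I=\{1,\dots,n-1\}$, $(a_{ij})$ the Cartan matrix of type $A_{n-1}$, $[k]=(q^k-q^{-k})/(q-q^{-1})$, $[x,y]=xy-yx$. $U_q(\mathfrak{sl}_n^{\langle\mathbf{Q}\rangle}[x])$ is the $\mathbb{C}$-algebra with generators $X^{\pm}_{i,t},J_{i,t},K_i^{\pm}$ ($i\in I,t\ge0$) and relations: all $K_i^+$, $J_{j,t}$ pairwise commute; $K_i^+K_i^-=1=K_i^-K_i^+$; $(K_i^-)^2=1-(q-q^{-1})J_{i,0}$; $X^{\pm}_{i,t+1}X^{\pm}_{j,s}-q^{\pm a_{ij}}X^{\pm}_{j,s}X^{\pm}_{i,t+1}=q^{\pm a_{ij}}X^{\pm}_{i,t}X^{\pm}_{j,s+1}-X^{\pm}_{j,s+1}X^{\pm}_{i,t}$; $K_i^+X^{\pm}_{j,t}K_i^-=q^{\pm a_{ij}}X^{\pm}_{j,t}$; $q^{\pm a_{ij}}J_{i,0}X^{\pm}_{j,t}-q^{\mp a_{ij}}X^{\pm}_{j,t}J_{i,0}=[\pm a_{ij}]X^{\pm}_{j,t}$;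 $[J_{i,s+1},X^{\pm}_{j,t}]=q^{\pm a_{ij}}J_{i,s}X^{\pm}_{j,t+1}-q^{\mp a_{ij}}X^{\pm}_{j,t+1}J_{i,s}$; $[X^+_{i,t},X^-_{j,s}]=\delta_{ij}K_i^+(J_{i,s+t}-Q_iJ_{i,s+t+1})$; $[X^\pm_{i,t},X^\pm_{j,s}]=0$ if $j\ne i,i\pm1$; $X^{\pm}_{i\pm1,u}(X^{\pm}_{i,s}X^{\pm}_{i,t}+X^{\pm}_{i,t}X^{\pm}_{i,s})+(X^{\pm}_{i,s}X^{\pm}_{i,t}+X^{\pm}_{i,t}X^{\pm}_{i,s})X^{\pm}_{i\pm1,u}=(q+q^{-1})(X^{\pm}_{i,s}X^{\pm}_{i\pm1,u}X^{\pm}_{i,t}+X^{\pm}_{i,t}X^{\pm}_{i\pm1,u}X^{\pm}_{i,s})$. $\mathbb{B}^{\langle\mathbf{Q}\rangle}=\prod_{i\in I}\mathbb{B}^{\langle Q_i\rangle}$ with $\mathbb{B}^{\langle Q\rangle}=\{\pm1\}$ if $Q=0$ and $\mathbb{C}^\times$ if $Q\ne0$. For $\boldsymbol\beta=(\beta_i)\in\mathbb{B}^{\langle\mathbf{Q}\rangle}$, $\mathcal{D}^{\langle\mathbf{Q}\rangle}_{\boldsymbol\beta}=\mathbb{C}v$ is the one-dimensional module with $X^\pm_{i,t}v=0$, $K_i^\pm v=\beta_i^{\pm1}v$, and $J_{i,t}v=0$ if $Q_i=0$, $J_{i,t}v=\frac{1-\beta_i^{-2}}{q-q^{-1}}Q_i^{-t}v$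 if $Q_i\ne0$ ($i\in I$, $t\ge0$); this is a well-defined module. *)

From HB Require Import structures.
From mathcomp Require Import all_boot all_order all_algebra.
From mathcomp Require Import complex.
From mathcomp Require Import Rstruct.
Set Implicit Arguments. Unset Strict Implicit. Unset Printing Implicit Defensive.
Import Order.TTheory GRing.Theory Num.Theory.
Local Open Scope ring_scope.

Notation C := (complex Rdefinitions.R).

(* The index set I = {1,...,n-1} is modelled as 'I_m with m = n-1;
   the ordinal i stands for the index i+1. *)

Definition cartan (m : nat) (i j : 'I_m) : int :=
  if i == j then (2 : int)
  else if (i.+1 == j :> nat) || (j.+1 == i :> nat) then (-1 : int) else (0 : int).

Definition sgn (e : bool) : int := if e then (1 : int) else (-1 : int).

Definition qint (q : C) (k : int) : C := (q ^ k - q ^ (- k)) / (q - q^-1).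

Record rep (m d : nat) := Rep {
  Xp : 'I_m -> nat -> 'M[C]_d;
  Xm : 'I_m -> nat -> 'M[C]_d;
  Jg : 'I_m -> nat -> 'M[C]_d;
  Kp : 'I_m -> 'M[C]_d;
  Km : 'I_m -> 'M[C]_d
}.

Definition Xs (m d : nat) (V : rep m d) (e : bool) : 'I_m -> nat -> 'M[C]_d :=
  if e then Xp V else Xm V.

Definition is_rep (q : C) (m : nat) (Q : 'I_m -> C) (d : nat) (V : rep m d) : Prop :=
  let a := @cartan m in
  let one := (1%:M : 'M[C]_d) in
  (forall i j, Kp V i *m Kp V j = Kp V j *m Kp V i) /\
  (forall i j t, Kp V i *m Jg V j t = Jg V j t *m Kp V i) /\
  (forall i j s t, Jg V i s *m Jg V j t = Jg V j t *m Jg V i s) /\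
  (forall i, Kp V i *m Km V i = one /\ Km V i *m Kp V i = one) /\
  (forall i, Km V i *m Km V i = one - (q - q^-1) *: Jg V i 0) /\
  (forall (e : bool) i j t s,
     let X := Xs V e in
     let qa := q ^ (sgn e * a i j) in
     let qma := q ^ (- (sgn e * a i j)) in
     (X i t.+1 *m X j s - qa *: (X j s *m X i t.+1)
        = qa *: (X i t *m X j s.+1) - X j s.+1 *m X i t) /\
     (Kp V i *m X j t *m Km V i = qa *: X j t) /\
     (qa *: (Jg V i 0 *m X j t) - qma *: (X j t *m Jg V i 0)
        = qint q (sgn e * a i j) *: X j t) /\
     (Jg V i s.+1 *m X j t - X j t *m Jg V i s.+1
        = qa *: (Jg V i s *m X j t.+1) - qma *: (X j t.+1 *m Jg V i s))) /\
  (forall i j t s,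
     Xp V i t *m Xm V j s - Xm V j s *m Xp V i t
       = if i == j then Kp V i *m (Jg V i (s + t) - Q i *: Jg V i (s + t).+1)
         else 0) /\
  (forall (e : bool) (i j : 'I_m) t s,
     j != i -> (j : nat) != i.+1 -> (j : nat).+1 != i ->
     Xs V e i t *m Xs V e j s = Xs V e j s *m Xs V e i t) /\
  (forall (e : bool) (i j : 'I_m) s t u,
     ((j : nat) == i.+1) || ((j : nat).+1 == i) ->
     let X := Xs V e in
     let S := X i s *m X i t + X i t *m X i s in
     X j u *m S + S *m X j u
       = (q + q^-1) *: (X i s *m X j u *m X i t + X i t *m X j u *m X i s)).

Definition rep_iso (m d : nat) (V W : rep m d) : Prop :=
  exists P : 'M[C]_d, P \in unitmx /\
    (forall i t, P *m Xp V i t = Xp W i t *m P) /\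
    (forall i t, P *m Xm V i t = Xm W i t *m P) /\
    (forall i t, P *m Jg V i t = Jg W i t *m P) /\
    (forall i, P *m Kp V i = Kp W i *m P) /\
    (forall i, P *m Km V i = Km W i *m P).

Definition inB (m : nat) (Q : 'I_m -> C) (beta : 'I_m -> C) : Prop :=
  forall i, if Q i == 0 then (beta i = 1 \/ beta i = -1) else beta i != 0.

Definition Dmod (q : C) (m : nat) (Q : 'I_m -> C) (beta : 'I_m -> C) : rep m 1 :=
  @Rep m 1
    (fun _ _ => 0) (fun _ _ => 0)
    (fun i t => (if Q i == 0 then 0
                 else (1 - (beta i)^-2) / (q - q^-1) * (Q i) ^- t)%:M)
    (fun i => (beta i)%:M) (fun i => (beta i)^-1%:M).

(* On a one-dimensional module every generator acts by a scalar, so all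
   commutators vanish.  Conjugating X^±_{i,t} by K_i^+ multiplies it by
   q^{±2} != 1, hence X^±_{i,t} = 0.  The relation [X^+_{i,0}, X^-_{i,t}] = 0
   then gives J_{i,t} = Q_i J_{i,t+1}, and (K_i^-)^2 = 1 - (q - q^-1) J_{i,0}
   pins J_{i,0} down in terms of beta_i := K_i^+.  If Q_i = 0 all J_{i,t}
   vanish and beta_i^2 = 1; otherwise J_{i,t} = J_{i,0} Q_i^{-t}.  This is
   exactly the module D_beta. *)
From HB Require Import structures.
From mathcomp Require Import all_boot all_order all_algebra.
From mathcomp Require Import complex Rstruct.
From mathcomp Require Import ring.
Set Implicit Arguments. Unset Strict Implicit. Unset Printing Implicit Defensive.
Import Order.TTheory GRing.Theory Num.Theory.
Local Open Scope ring_scope.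

Lemma mx11_mulE (R : pzSemiRingType) (A B : 'M[R]_1) :
  (A *m B) 0 0 = A 0 0 * B 0 0.
Proof. by rewrite mxE big_ord1. Qed.

Lemma mx11_scalarE (R : pzSemiRingType) (a : R) : (a%:M : 'M[R]_1) 0 0 = a.
Proof. by rewrite mxE mulr1n. Qed.

Lemma mx11_inj (R : pzSemiRingType) (A B : 'M[R]_1) : A 0 0 = B 0 0 -> A = B.
Proof. by move=> eqAB; rewrite [A]mx11_scalar [B]mx11_scalar eqAB. Qed.

Lemma cartan_diag (m : nat) (i : 'I_m) : cartan i i = 2.
Proof. by rewrite /cartan eqxx. Qed.

Lemma expz_sgn2_neq1 (R : unitRingType) (q : R) (e : bool) :
  q ^+ 2 != 1 -> q ^ (sgn e * 2) != 1.
Proof.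
case: e => q2.
  by rewrite (_ : _ * 2 = 2%:Z) // -exprnP.
by rewrite (_ : _ * 2 = - 2%:Z) // -invr_expz invr_eq1 -exprnP.
Qed.

Lemma geometric_expV (F : fieldType) (a : F) (f : nat -> F) :
  a != 0 -> (forall t, f t = a * f t.+1) -> forall t, f t = f 0%N * a ^- t.
Proof.
move=> a_neq0 f_rec; elim=> [|t IHt]; first by rewrite expr0 invr1 mulr1.
apply: (mulfI a_neq0); rewrite -f_rec IHt exprSr invfM.
by field; rewrite a_neq0 expf_neq0.
Qed.

Lemma rep_iso_eq (m d : nat) (V W : rep m d) :
  Xp V =2 Xp W -> Xm V =2 Xm W -> Jg V =2 Jg W -> Kp V =1 Kp W ->
  Km V =1 Km W -> rep_iso V W.
Proof.
move=> eqXp eqXm eqJg eqKp eqKm; exists 1%:M; split; first exact: unitmx1.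
by do !split=> *; rewrite mul1mx mulmx1 ?eqXp ?eqXm ?eqJg ?eqKp ?eqKm.
Qed.

Section OneDimensionalModule.

Variables (q : C) (m : nat) (Q : 'I_m -> C) (V : rep m 1).
Hypothesis q_neq0 : q != 0.
Hypothesis q2_neq1 : q ^+ 2 != 1.
Hypothesis KpKm : forall i, Kp V i *m Km V i = 1%:M.
Hypothesis Km_sqr : forall i, Km V i *m Km V i = 1%:M - (q - q^-1) *: Jg V i 0.
Hypothesis Kp_conj_Xs : forall e i t,
  Kp V i *m Xs V e i t *m Km V i = q ^ (sgn e * cartan i i) *: Xs V e i t.
Hypothesis Xp0_Xm_comm : forall i u,
  Xp V i 0 *m Xm V i u - Xm V i u *m Xp V i 0
    = Kp V i *m (Jg V i u - Q i *: Jg V i u.+1).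

Lemma Kp11_Km11 i : Kp V i 0 0 * Km V i 0 0 = 1.
Proof. by rewrite -mx11_mulE KpKm mx11_scalarE. Qed.

Lemma Kp11_neq0 i : Kp V i 0 0 != 0.
Proof.
apply/eqP=> Kp0; have := Kp11_Km11 i.
by rewrite Kp0 mul0r => /esym/eqP; rewrite oner_eq0.
Qed.

Lemma Km11E i : Km V i 0 0 = (Kp V i 0 0)^-1.
Proof. by rewrite -[RHS]mulr1 -(Kp11_Km11 i) mulKf ?Kp11_neq0. Qed.

Lemma Xs_eq0 e i t : Xs V e i t = 0.
Proof.
apply: mx11_inj; rewrite mxE; apply/eqP; apply: contraT => x_neq0.
have := congr1 (fun A : 'M_1 => A 0 0) (Kp_conj_Xs e i t).
rewrite /= !mx11_mulE mxE mulrAC Kp11_Km11 cartan_diag => /eqP.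
rewrite -subr_eq0 -mulrBl mulf_eq0 (negPf x_neq0) orbF subr_eq0 eq_sym.
by rewrite (negPf (expz_sgn2_neq1 e q2_neq1)).
Qed.

Lemma Xp_eq0 i t : Xp V i t = 0. Proof. exact: (Xs_eq0 true). Qed.

Lemma Xm_eq0 i t : Xm V i t = 0. Proof. exact: (Xs_eq0 false). Qed.

Lemma Jg11_rec i u : Jg V i u 0 0 = Q i * Jg V i u.+1 0 0.
Proof.
have := congr1 (fun A : 'M_1 => A 0 0) (Xp0_Xm_comm i u).
rewrite Xp_eq0 Xm_eq0 mul0mx subr0 /= mx11_mulE !mxE.
by move/esym/eqP; rewrite mulf_eq0 (negPf (Kp11_neq0 i)) subr_eq0 => /eqP.
Qed.

Lemma Km11_sqr i : Km V i 0 0 ^+ 2 = 1 - (q - q^-1) * Jg V i 0 0 0.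
Proof. by rewrite expr2 -mx11_mulE Km_sqr !mxE mulr1n. Qed.

Lemma Jg11_Q0 i t : Q i = 0 -> Jg V i t 0 0 = 0.
Proof. by move=> Q0; rewrite Jg11_rec Q0 mul0r. Qed.

Lemma Kp11_sign i : Q i = 0 -> Kp V i 0 0 = 1 \/ Kp V i 0 0 = -1.
Proof.
move=> Q0; have : Km V i 0 0 ^+ 2 == 1 by rewrite Km11_sqr Jg11_Q0 // mulr0 subr0.
rewrite Km11E exprVn invr_eq1 sqrf_eq1.
by case/orP=> /eqP ->; [left | right].
Qed.

Lemma Jg11E i t : Q i != 0 ->
  Jg V i t 0 0 = (1 - (Kp V i 0 0)^-2) / (q - q^-1) * Q i ^- t.
Proof.
move=> Q_neq0; rewrite (geometric_expV Q_neq0 (Jg11_rec i)); congr (_ * _).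
rewrite -exprVn -Km11E Km11_sqr.
by field; rewrite q_neq0 -expr2 subr_eq0 q2_neq1.
Qed.

Lemma one_dim_rep_iso_Dmod :
  inB Q (fun i => Kp V i 0 0) /\ rep_iso V (Dmod q Q (fun i => Kp V i 0 0)).
Proof.
split=> [i|]; first by case: eqP => [/Kp11_sign | _] //; exact: Kp11_neq0.
apply: rep_iso_eq => [i t|i t|i t|i|i] /=.
- exact: Xp_eq0.
- exact: Xm_eq0.
- apply: mx11_inj; rewrite mx11_scalarE.
  by case: eqP => [/Jg11_Q0 | /eqP /Jg11E].
- exact: mx11_scalar.
- by apply: mx11_inj; rewrite mx11_scalarE Km11E.
Qed.

End OneDimensionalModule.

Theorem mainTheorem12 (q : C) (n : nat) (Q : 'I_n.-1 -> C) :
  q != 0 -> (forall k : nat, (0 < k)%N -> q ^+ k != 1) -> (2 <= n)%N ->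
  forall V : rep n.-1 1, is_rep q Q V ->
  exists beta : 'I_n.-1 -> C, inB Q beta /\ rep_iso V (Dmod q Q beta).
Proof.
move=> q_neq0 q_not_root _ V [_ [_ [_ [KpKm [Km_sqr [HX [HXpXm _]]]]]]].
exists (fun i => Kp V i 0 0).
apply: (one_dim_rep_iso_Dmod q_neq0 (q_not_root 2%N isT) _ Km_sqr) => [i | e i t | i u].
- by case: (KpKm i).
- by have [_ []] := HX e i i t t.
- by have := HXpXm i i 0%N u; rewrite eqxx addn0.
Qed.
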